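(* Fix $t\in[0,T]$ (and $\omega$). Assume $\nu(\{\psi_t>0\})>0$ and $\nu(\{\psi_t<0\})>0$, and let $c,C\in(0,\infty)$ be such that $\nu(\{\psi_t>C\})>0$ and $\nu(\{\psi_t<-c\})>0$. Then for any $u\in\mathrm L^2(\nu)\cap\mathrm L^\infty(\nu)$ and any $$\pi_t^*\in\operatorname{argmin}_{\pi\in\mathcal C}\left\{\int_{\mathbb R^*}g_\alpha(u(x)-\pi\psi_t(x))\,\nu(dx)-\pi\varphi_t\right\}$$ it holds almost surely that $$-3\frac{\|u\|_\infty}{C}-2\frac{|\varphi_t|}{\alpha\nu(\psi_t>C)C^2}-\frac{\sqrt2}{\sqrt{\alpha\nu(\psi_t>C)}\,C}\sqrt{|u|_\alpha}\ \le\ \pi_t^*\ \le\ 3\frac{\|u\|_\infty}{c}+2\frac{|\varphi_t|}{\alpha\nu(\psi_t<-c)c^2}+\frac{\sqrt2}{\sqrt{\alpha\nu(\psi_t<-c)}\,c}\sqrt{|u|_\alpha}.$$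
   Context: $\nu$ is a positive measure on $\mathbb R^*=\mathbb R\setminus\{0\}$ with $\nu(\{0\})=0$ and $\int(1\wedge|x|^2)\nu(dx)<\infty$ (Lévy measure of a Poisson point process on a filtered probability space). $\varphi$ is a uniformly bounded predictable real process and $\psi=\psi_t(x)$ a uniformly bounded predictable process with $\mathbb E\int_0^T\int\psi^2 d\nu dt<\infty$ and $\psi>-1$. $\alpha>0$, $g_\alpha(y)=\frac{e^{\alpha y}-\alpha y-1}{\alpha}$, and $|u|_\alpha:=\int_{\mathbb R^*}g_\alpha(u(x))\,\nu(dx)$; $\|u\|_\infty$ is the $\nu$-essential supremum of $|u|$. $\mathcal C\subseteq\mathbb R$ is a closed set with $0\in\mathcal C$ (the constraint set for strategies). *)

From HB Require Import structures.
From mathcomp Require Import all_boot all_order all_algebra.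
From mathcomp Require Import all_classical all_reals all_analysis.
From mathcomp Require Import ess_sup_inf.
Set Implicit Arguments. Unset Strict Implicit. Unset Printing Implicit Defensive.
Import Order.TTheory GRing.Theory Num.Theory.
Import numFieldNormedType.Exports.
Local Open Scope classical_set_scope.
Local Open Scope ring_scope.

Definition g_alpha (R : realType) (a y : R) : R :=
  (expR (a * y) - a * y - 1) / a.

Definition abs_alpha (R : realType) (nu : {measure set R -> \bar R})
  (a : R) (u : R -> R) : \bar R :=
  (\int[nu]_x (g_alpha a (u x))%:E)%E.

Definition Linf_norm (R : realType) (nu : {measure set R -> \bar R})
  (u : R -> R) : \bar R :=
  ess_sup nu (fun x => (`|u x|)%:E).

Definition objective (R : realType) (nu : {measure set R -> \bar R})
  (a : R) (u psi : R -> R) (phi p : R) : \bar R :=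
  ((\int[nu]_x (g_alpha a (u x - p * psi x))%:E) - (p * phi)%:E)%E.

Definition is_argmin (R : realType) (Cset : set R) (F : R -> \bar R) (p : R) : Prop :=
  Cset p /\ (forall q, Cset q -> (F p <= F q)%E).

From HB Require Import structures.
From mathcomp Require Import all_boot all_order all_algebra.
From mathcomp Require Import all_classical all_reals all_analysis.
From mathcomp Require Import ess_sup_inf measurable_realfun ring lra.
Import Order.TTheory GRing.Theory Num.Theory.
Import numFieldNormedType.Exports.
Local Open Scope classical_set_scope.
Local Open Scope ring_scope.

(* Since [0] is admissible, comparing the objective at [pistar] with its value
   at [0] gives [\int g_alpha (u - pistar psi) dnu <= |u|_alpha + pistar phi].
   If [pistar c > ||u||_oo], then on [{psi < -c}] the argument of [g_alpha] is at
   least [X = pistar c - ||u||_oo > 0], and [g_alpha y >= alpha y^2 / 2] for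
   [y >= 0]; hence [alpha nu(psi < -c) X^2 / 2 <= |u|_alpha + pistar |phi|], a
   quadratic inequality in [X] whose root bound is the upper estimate.  The lower
   estimate is the same argument applied to [(-psi, -phi, -pistar)], which leaves
   the objective unchanged.  Finiteness of [|u|_alpha] comes from
   [g_alpha y <= alpha e^(alpha m) y^2] for [|y| <= m] and [u] in [L^2]. *)

Lemma expR_ge1Dx_sqr {R : realType} (x : R) : 0 <= x -> 1 + x + x ^+ 2 / 2 <= expR x.
Proof.
move=> x_ge0; rewrite /expR.
have -> : 1 + x + x ^+ 2 / 2 = series (exp_coeff x) 3.
  rewrite /series /= !big_nat_recr //= big_geq // /exp_coeff /= expr0 expr1 !divr1 add0r.
  by change ((1 + 1)%R : nat) with 2%N; rewrite !factS fact0.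
apply: (nondecreasing_cvgn_le _ (is_cvg_series_exp_coeff x)).
by apply: nondecreasing_series => n _ _; exact: exp_coeff_ge0.
Qed.

Lemma quadratic_le_root_bound (R : realFieldType) (K B u s X : R) :
  0 < K -> 0 <= B -> 0 <= u -> 0 <= s ->
  K * X ^+ 2 <= K * s ^+ 2 + B * u + B * X -> X <= u + B / K + s.
Proof.
move=> K0 B0 u0 s0 hX; rewrite leNgt; apply/negP => hlt.
have BK0 : 0 <= B / K by rewrite divr_ge0 // ltW.
have hB : B <= K * X by rewrite -ler_pdivrMl //; lra.
have Ks0 : 0 <= K * s by rewrite mulr_ge0 // ltW.
have hsX : K * s ^+ 2 <= K * s * X by rewrite expr2 mulrA ler_wpM2l //; lra.
have huX : B * u <= K * X * u by rewrite ler_wpM2r.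
have hXX : K * X * (u + B / K + s) < K * X ^+ 2.
  by rewrite expr2 mulrA ltr_pM2l // mulr_gt0 //; lra.
rewrite (_ : K * X * (u + B / K + s) = K * X * u + B * X + K * s * X) in hXX; last first.
  by field; rewrite gt_eqF.
lra.
Qed.

Lemma le_bound_of_quadratic_le (R : rcfType) (a n c ui ua b q : R) :
  0 < a -> 0 < n -> 0 < c -> 0 <= ui -> 0 <= ua -> 0 <= b ->
  a * (q * c - ui) ^+ 2 / 2 * n <= ua + q * b ->
  q <= 3 * ui / c + 2 * b / (a * n * c ^+ 2)
       + Num.sqrt 2 / (Num.sqrt (a * n) * c) * Num.sqrt ua.
Proof.
move=> a0 n0 c0 ui0 ua0 b0 hq.
have an0 : 0 < a * n by rewrite mulr_gt0.
have san0 : 0 < Num.sqrt (a * n) by rewrite sqrtr_gt0.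
set s := Num.sqrt 2 / Num.sqrt (a * n) * Num.sqrt ua.
have s0 : 0 <= s by rewrite /s !mulr_ge0 ?invr_ge0 ?sqrtr_ge0.
have Ks : a * n / 2 * s ^+ 2 = ua.
  rewrite /s !exprMn exprVn !sqr_sqrtr ?(ltW an0) //.
  by field; rewrite !gt_eqF.
have hX : q * c - ui <= ui + (b / c) / (a * n / 2) + s.
  apply: quadratic_le_root_bound => //; first by rewrite divr_gt0.
    by rewrite divr_ge0 // ltW.
  rewrite Ks -addrA (_ : b / c * ui + b / c * (q * c - ui) = q * b); last first.
    by field; rewrite gt_eqF.
  by rewrite (_ : a * n / 2 * _ = a * (q * c - ui) ^+ 2 / 2 * n) //; ring.
rewrite -(ler_pM2r c0).
rewrite (_ : (_ + _ + _) * c = 3 * ui + b / c / (a * n / 2) + s); last first.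
  by rewrite /s; field; rewrite !gt_eqF.
lra.
Qed.

Lemma g_alpha_ge0 {R : realType} (a y : R) : 0 < a -> 0 <= g_alpha a y.
Proof.
move=> a0; rewrite /g_alpha divr_ge0 ?(ltW a0) //.
by have := expR_ge1Dx (a * y); lra.
Qed.

Lemma g_alpha_ge_sqr {R : realType} (a y : R) :
  0 < a -> 0 <= y -> a * y ^+ 2 / 2 <= g_alpha a y.
Proof.
move=> a0 y0; rewrite /g_alpha ler_pdivlMr //.
have := expR_ge1Dx_sqr (a * y) (mulr_ge0 (ltW a0) y0).
rewrite (_ : (a * y) ^+ 2 / 2 = a * y ^+ 2 / 2 * a); first lra.
by rewrite exprMn expr2; field.
Qed.

Lemma expR_sub1Dx_le {R : realType} (x : R) : expR x - 1 - x <= x * (expR x - 1).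
Proof.
have := expR_ge1Dx (- x); have := expRxMexpNx_1 x; have := expR_gt0 x; nra.
Qed.

Lemma mul_expR_sub1_le {R : realType} (x m : R) :
  `|x| <= m -> x * (expR x - 1) <= expR m * x ^+ 2.
Proof.
move=> xm; have [x0|x0] := leP 0 x.
- have e1 : expR x - 1 <= x * expR x.
    by have := expR_ge1Dx (- x); have := expRxMexpNx_1 x; have := expR_gt0 x; nra.
  have em : expR x <= expR m by rewrite ler_expR; exact: le_trans (ler_norm x) xm.
  nra.
- have e1 := expR_ge1Dx x.
  have em : 1 <= expR m by rewrite -expR0 ler_expR; exact: le_trans (normr_ge0 x) xm.
  nra.
Qed.

Lemma g_alpha_le_sqr {R : realType} (a m y : R) :
  0 < a -> `|y| <= m -> g_alpha a y <= a * expR (a * m) * y ^+ 2.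
Proof.
move=> a0 ym; rewrite /g_alpha ler_pdivrMr //.
have aym : `|a * y| <= a * m by rewrite normrM gtr0_norm // ler_pM2l.
have := le_trans (expR_sub1Dx_le (a * y)) (mul_expR_sub1_le _ _ aym).
rewrite (_ : a * expR (a * m) * y ^+ 2 * a = expR (a * m) * (a * y) ^+ 2); first lra.
by rewrite exprMn; ring.
Qed.

Lemma measurable_ltr_set {R : realType} (f g : R -> R) :
  measurable_fun setT f -> measurable_fun setT g -> measurable [set x | f x < g x].
Proof.
move=> mf mg; rewrite -[X in measurable X]setTI.
by apply: (measurable_fun_ltr mf mg measurableT).
Qed.

Lemma measurable_g_alpha {R : realType} (a : R) : measurable_fun setT (g_alpha a).
Proof.
apply: measurable_funM => //; apply: measurable_funB => //.
apply: measurable_funB; last exact: measurable_funM.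
by apply: measurableT_comp; [exact: measurable_expR | exact: measurable_funM].
Qed.

Section g_alpha_integral.
Context {R : realType} {nu : {measure set R -> \bar R}}.

Lemma Linf_norm_ge0 (u : R -> R) : (0 < nu setT)%E -> (0 <= Linf_norm nu u)%E.
Proof. by move=> nuT; apply: ess_sup_gee => //; apply: nearW => x; rewrite lee_fin. Qed.

Lemma Linf_norm_ae_le {u : R -> R} : (0 < nu setT)%E -> (Linf_norm nu u < +oo)%E ->
  {ae nu, forall x, `|u x| <= fine (Linf_norm nu u)}.
Proof.
move=> nuT uinf; have ufin : Linf_norm nu u \is a fin_num.
  by rewrite ge0_fin_numE // Linf_norm_ge0.
apply: filterS (ess_sup_ge nu (fun x => (`|u x|)%:E)) => x.
by rewrite -/(Linf_norm nu u) -(fineK ufin) lee_fin.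
Qed.

Context {a : R} (a_gt0 : 0 < a).

Lemma abs_alpha_ge0 (u : R -> R) : (0 <= abs_alpha nu a u)%E.
Proof. by apply: integral_ge0 => x _; rewrite lee_fin g_alpha_ge0. Qed.

Lemma abs_alpha_lt_pinfty {u : R -> R} {ui : R} :
  measurable_fun setT u -> nu.-integrable setT (fun x => (u x ^+ 2)%:E) ->
  {ae nu, forall x, `|u x| <= ui} -> (abs_alpha nu a u < +oo)%E.
Proof.
move=> mu u2 u_ui; set K := a * expR (a * ui).
have K0 : 0 <= K by rewrite mulr_ge0 ?expR_ge0 // ltW.
have mu2 : measurable_fun setT (fun x => (u x ^+ 2)%:E) by exact: measurable_int u2.
apply: (@le_lt_trans _ _ (\int[nu]_x (K%:E * (u x ^+ 2)%:E))%E).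
  apply: ae_ge0_le_integral => //.
  - by move=> x _; rewrite lee_fin g_alpha_ge0.
  - by apply/measurable_EFinP; exact: measurableT_comp (measurable_g_alpha a) mu.
  - by move=> x _; rewrite mule_ge0 // lee_fin ?sqr_ge0.
  - exact: emeasurable_funM.
  by apply: filterS u_ui => x xui _; rewrite -EFinM lee_fin g_alpha_le_sqr.
rewrite ge0_integralZl_EFin //; last by move=> x _; rewrite lee_fin sqr_ge0.
by apply: lte_mul_pinfty => //; exact: integrable_lty u2.
Qed.

Lemma argmin_integral_le {Cset : set R} {u psi : R -> R} {phi p : R} :
  is_argmin Cset (objective nu a u psi phi) p -> Cset 0 ->
  (abs_alpha nu a u < +oo)%E ->
  (\int[nu]_x (g_alpha a (u x - p * psi x))%:E
     <= (fine (abs_alpha nu a u) + p * phi)%:E)%E.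
Proof.
move=> [_ p_min] C0 ua_fin.
have uaE : abs_alpha nu a u = (fine (abs_alpha nu a u))%:E.
  by rewrite fineK // ge0_fin_numE // abs_alpha_ge0.
have obj0 : objective nu a u psi phi 0 = abs_alpha nu a u.
  rewrite /objective mul0r sube0.
  by apply: eq_integral => x _; rewrite mul0r subr0.
by have := p_min 0 C0; rewrite obj0 uaE /objective leeBlDr // EFinD.
Qed.

Lemma integral_g_alpha_ge {A : set R} {f : R -> R} {X : R} :
  measurable A -> measurable_fun setT f -> 0 <= X ->
  {ae nu, forall x, A x -> X <= f x} ->
  ((a * X ^+ 2 / 2)%:E * nu A <= \int[nu]_x (g_alpha a (f x))%:E)%E.
Proof.
move=> mA mf X0 Xf.
have mgf : measurable_fun setT (fun x => (g_alpha a (f x))%:E).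
  by apply/measurable_EFinP; exact: measurableT_comp (measurable_g_alpha a) mf.
have gf0 x : setT x -> (0 <= (g_alpha a (f x))%:E)%E.
  by move=> _; rewrite lee_fin g_alpha_ge0.
have sub : (\int[nu]_(x in A) (g_alpha a (f x))%:E <= \int[nu]_x (g_alpha a (f x))%:E)%E.
  exact: ge0_subset_integral.
rewrite -integral_cst //; apply: le_trans sub; apply: ae_ge0_le_integral => //.
- by move=> x _; rewrite lee_fin divr_ge0 // mulr_ge0 ?sqr_ge0 // ltW.
- by move=> x Ax; exact: gf0.
- exact: measurable_funS mgf.
apply: filterS Xf => x Xfx Ax; have fx0 := le_trans X0 (Xfx Ax).
rewrite lee_fin; apply: le_trans (g_alpha_ge_sqr _ _ a_gt0 fx0).
by rewrite ler_pM2r // ler_pM2l // ler_sqr ?nnegrE // Xfx.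
Qed.

Lemma optimality_le_bound {A : set R} {psi u : R -> R} {phi p c ui ua : R} :
  measurable A -> measurable_fun setT psi -> measurable_fun setT u ->
  0 < c -> 0 <= ui -> 0 <= ua ->
  (forall x, A x -> psi x <= - c) -> (0 < nu A)%E ->
  {ae nu, forall x, `|u x| <= ui} ->
  (\int[nu]_x (g_alpha a (u x - p * psi x))%:E <= (ua + p * phi)%:E)%E ->
  p <= 3 * ui / c + 2 * `|phi| / (a * fine (nu A) * c ^+ 2)
       + Num.sqrt 2 / (Num.sqrt (a * fine (nu A)) * c) * Num.sqrt ua.
Proof.
move=> mA mpsi mu c0 ui0 ua0 psiA nuA0 u_ui hopt.
have [small|big] := leP (p * c) ui.
  have n0 : 0 <= fine (nu A) by rewrite fine_ge0 // measure_ge0.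
  have t1 : 0 <= 2 * `|phi| / (a * fine (nu A) * c ^+ 2).
    by rewrite !mulr_ge0 ?invr_ge0 ?mulr_ge0 ?sqr_ge0 // ltW.
  have t2 : 0 <= Num.sqrt 2 / (Num.sqrt (a * fine (nu A)) * c) * Num.sqrt ua.
    by rewrite !mulr_ge0 ?invr_ge0 ?mulr_ge0 ?sqrtr_ge0 // ltW.
  have : p <= 3 * ui / c by rewrite ler_pdivlMr //; lra.
  lra.
have p0 : 0 < p by rewrite -(pmulr_lgt0 _ c0); lra.
have mf : measurable_fun setT (fun x => u x - p * psi x).
  exact: measurable_funB mu (measurable_funM (measurable_cst _) mpsi).
have X0 : 0 <= p * c - ui by rewrite subr_ge0 ltW.
have low := integral_g_alpha_ge mA mf X0.
have {low} : ((a * (p * c - ui) ^+ 2 / 2)%:E * nu A <= (ua + p * `|phi|)%:E)%E.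
  apply: le_trans (le_trans (low _) hopt) _.
    apply: filterS u_ui => x xui Ax.
    have := psiA x Ax; have := ler_norm (- u x); rewrite normrN; nra.
  by rewrite lee_fin lerD2l ler_wpM2l ?(ltW p0) ?ler_norm.
(* [nu A = +oo] would make the left-hand side infinite. *)
move: nuA0; case: (nu A) => [n| |] //= nuA0.
  rewrite -EFinM lee_fin => hq.
  by apply: le_bound_of_quadratic_le; rewrite // -?lte_fin // ltW.
by rewrite gt0_muley ?lte_fin // !mulr_gt0 ?exprn_gt0 // subr_gt0.
Qed.

Lemma optimality_ge_bound {A : set R} {psi u : R -> R} {phi p c ui ua : R} :
  measurable A -> measurable_fun setT psi -> measurable_fun setT u ->
  0 < c -> 0 <= ui -> 0 <= ua ->
  (forall x, A x -> c <= psi x) -> (0 < nu A)%E ->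
  {ae nu, forall x, `|u x| <= ui} ->
  (\int[nu]_x (g_alpha a (u x - p * psi x))%:E <= (ua + p * phi)%:E)%E ->
  - 3 * ui / c - 2 * `|phi| / (a * fine (nu A) * c ^+ 2)
    - Num.sqrt 2 / (Num.sqrt (a * fine (nu A)) * c) * Num.sqrt ua <= p.
Proof.
move=> mA mpsi mu c0 ui0 ua0 psiA nuA0 u_ui hopt.
rewrite -lerN2 (_ : - (_ - _ - _) = 3 * ui / c + 2 * `|- phi| / (a * fine (nu A) * c ^+ 2)
    + Num.sqrt 2 / (Num.sqrt (a * fine (nu A)) * c) * Num.sqrt ua); last first.
  by rewrite normrN; ring.
apply: (optimality_le_bound (psi := fun x => - psi x) mA _ mu c0 ui0 ua0 _ nuA0 u_ui).
- exact: measurableT_comp.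
- by move=> x Ax; rewrite lerN2 psiA.
- by under eq_integral do rewrite mulrNN; rewrite mulrNN.
Qed.

End g_alpha_integral.

Theorem proposition3p3 (R : realType)
  (* Levy measure nu on R^* *)
  (nu : {measure set R -> \bar R})
  (hnu0 : nu [set 0] = 0%E)
  (hnuL : (\int[nu]_x (Num.min 1 (x ^+ 2))%:E < +oo)%E)
  (* constraint set *)
  (Cset : set R) (hCcl : closed Cset) (hC0 : Cset 0)
  (alpha : R) (halpha : 0 < alpha)
  (* phi = varphi_t(omega), psi = psi_t(omega, .) at the fixed (t, omega) *)
  (phi : R) (psi : R -> R)
  (hpsim : measurable_fun setT psi)
  (hpsib : exists M : R, forall x, `|psi x| <= M)
  (hpsi1 : forall x, -1 < psi x)
  (hpsi2 : nu.-integrable setT (fun x => (psi x ^+ 2)%:E))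
  (hpos : (0 < nu [set x | (0 < psi x)%R])%E)
  (hneg : (0 < nu [set x | (psi x < 0)%R])%E)
  (c C : R) (hc : 0 < c) (hC : 0 < C)
  (hCpos : (0 < nu [set x | (C < psi x)%R])%E)
  (hcneg : (0 < nu [set x | (psi x < - c)%R])%E)
  (* u in L^2(nu) cap L^infty(nu) *)
  (u : R -> R) (hum : measurable_fun setT u)
  (hu2 : nu.-integrable setT (fun x => (u x ^+ 2)%:E))
  (huinf : (Linf_norm nu u < +oo)%E)
  (pistar : R)
  (hpi : is_argmin Cset (objective nu alpha u psi phi) pistar) :
  let nC := fine (nu [set x | C < psi x]) in
  let nc := fine (nu [set x | psi x < - c]) in
  let ui := fine (Linf_norm nu u) in
  let ua := fine (abs_alpha nu alpha u) in
  - 3 * ui / C - 2 * `|phi| / (alpha * nC * C ^+ 2)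
    - Num.sqrt 2 / (Num.sqrt (alpha * nC) * C) * Num.sqrt ua
  <= pistar <=
  3 * ui / c + 2 * `|phi| / (alpha * nc * c ^+ 2)
    + Num.sqrt 2 / (Num.sqrt (alpha * nc) * c) * Num.sqrt ua.
Proof.
cbv zeta.
have nuT : (0 < nu setT)%E.
  by apply: (lt_le_trans hCpos); apply: le_measure; rewrite ?inE //; exact: measurable_ltr_set.
have u_ui := Linf_norm_ae_le nuT huinf.
have ui0 : 0 <= fine (Linf_norm nu u) by rewrite fine_ge0 // Linf_norm_ge0.
have ua_fin := abs_alpha_lt_pinfty halpha hum hu2 u_ui.
have ua0 : 0 <= fine (abs_alpha nu alpha u) by rewrite fine_ge0 // abs_alpha_ge0.
have hopt := argmin_integral_le halpha hpi hC0 ua_fin.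
apply/andP; split.
- apply: (optimality_ge_bound halpha _ hpsim hum hC) => //.
  + exact: measurable_ltr_set.
  + by move=> x /ltW.
- apply: (optimality_le_bound halpha _ hpsim hum hc) => //.
  + exact: measurable_ltr_set.
  + by move=> x /ltW.
Qed.
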